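(* Let $L=\{<,\ldots\}$ be a countable first order language containing a binary relation symbol $<$, and let $T$ be a complete $L$-theory with Skolem functions in which $<$ is interpreted as a linear order. Suppose $T$ satisfies the regularity scheme. Let $M\models T$, let $\varphi(\bar{x},\bar{t})$ be an $L$-formula with $\bar{x}=(x_1,\ldots,x_n)$, and let $\bar{b}\in M$ with $|\bar{b}|=|\bar{t}|$ be such that $\varphi(\bar{x},\bar{b})$ is $\bar{x}$-unbounded in $M$. Let $\tau(\bar{u},\bar{s})$ be an $L$-term with $|\bar{u}|<n$, and let $a\in M$. Then $\varphi(\bar{x},\bar{b})\wedge B_{\tau}(\bar{x};a)$ is $\bar{x}$-unbounded in $M$.
   Context: ''$T$ has Skolem functions'' means that for every formula $\theta(y,\bar{x})$ there is a term $\tau(\bar{x})$ of $L$ with $T\models \forall\bar{x}(\exists y\,\theta(y,\bar{x})\to\theta(\tau(\bar{x}),\bar{x}))$. Tuple inequalities such as $\bar{s}<a$ mean every coordinate is $<a$. For $\bar{x}=(x_1,\ldots,x_n)$ and a formula $\chi(\bar{x})$ with parameters from a model $M$, $\chi(\bar{x})$ is $\bar{x}$-unbounded in $M$ if $M\models(\forall\alpha_1)(\exists x_1>\alpha_1)\cdots(\forall\alpha_n)(\exists x_n>\alpha_n)\chi(\bar{x})$; otherwise it is $\bar{x}$-bounded. $T$ satisfies the regularity scheme if for every $L$-formula $\varphi(\bar{x},\bar{y},\bar{t})$ (with $\bar{x}$ of any finite length), every model $M\models T$, every $y_0\in M$ and every $\bar{b}\in M$: if $(\exists\bar{y}<y_0)\varphi(\bar{x},\bar{y},\bar{b})$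 is $\bar{x}$-unbounded in $M$, then for some $\bar{y}_1<y_0$ in $M$, $\varphi(\bar{x},\bar{y}_1,\bar{b})$ is $\bar{x}$-unbounded in $M$. For a term $\tau(\bar{u},\bar{s})$ with $k=|\bar{u}|<n$, for integers $0<i_1<\cdots<i_{k+1}\leq n$ and an element $a$, let $A_{\tau}(x_{i_1},\ldots,x_{i_{k+1}};a)$ be the formula $(\forall\bar{s}<a)[\tau(x_{i_1},\ldots,x_{i_k},\bar{s})<x_{i_{k+1}}]$, and let $B_{\tau}(x_1,\ldots,x_n;a)$ be the conjunction of $A_{\tau}(x_{i_1},\ldots,x_{i_{k+1}};a)$ over all $0<i_1<\cdots<i_{k+1}\leq n$. *)

From Stdlib Require Import List Arith Fin.
Import ListNotations.
Set Implicit Arguments.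

Record signature := {
  Fsym : nat -> Type;
  Rsym : nat -> Type;
  ltsym : Rsym 2
}.

Definition countable_sig (L : signature) : Prop :=
  (exists f : {n : nat & Fsym L n} -> nat, forall u v, f u = f v -> u = v) /\
  (exists g : {n : nat & Rsym L n} -> nat, forall u v, g u = g v -> u = v).

Section Syntax.
Variable L : signature.

Inductive term : Type :=
| var : nat -> term
| app : forall n, Fsym L n -> (Fin.t n -> term) -> term.

Inductive formula : Type :=
| f_eq : term -> term -> formula
| f_rel : forall n, Rsym L n -> (Fin.t n -> term) -> formula
| f_false : formula
| f_not : formula -> formula
| f_and : formula -> formula -> formula
| f_or : formula -> formula -> formula
| f_imp : formula -> formula -> formula
| f_ex : formula -> formula
| f_all : formula -> formula.

Fixpoint bounded_t (k : nat) (t : term) : Prop :=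
  match t with
  | var i => i < k
  | @app _ _ args => forall j, bounded_t k (args j)
  end.

Fixpoint bounded_f (k : nat) (p : formula) : Prop :=
  match p with
  | f_eq t1 t2 => bounded_t k t1 /\ bounded_t k t2
  | @f_rel _ _ args => forall j, bounded_t k (args j)
  | f_false => True
  | f_not q => bounded_f k q
  | f_and q r | f_or q r | f_imp q r => bounded_f k q /\ bounded_f k r
  | f_ex q | f_all q => bounded_f (S k) q
  end.

Definition sentence (p : formula) : Prop := bounded_f 0 p.
End Syntax.

Arguments var {L} _.
Arguments app {L n} _ _.
Arguments f_eq {L} _ _.
Arguments f_rel {L n} _ _.
Arguments f_false {L}.
Arguments f_not {L} _.
Arguments f_and {L} _ _.
Arguments f_or {L} _ _.
Arguments f_imp {L} _ _.
Arguments f_ex {L} _.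
Arguments f_all {L} _.

Record structure (L : signature) := {
  dom :> Type;
  dom_inh : dom;
  ifun : forall n, Fsym L n -> (Fin.t n -> dom) -> dom;
  irel : forall n, Rsym L n -> (Fin.t n -> dom) -> Prop
}.

Section Semantics.
Variable L : signature.
Variable M : structure L.

Definition scons (x : M) (e : nat -> M) : nat -> M :=
  fun i => match i with 0 => x | S j => e j end.

Fixpoint eval_t (e : nat -> M) (t : term L) : M :=
  match t with
  | var i => e i
  | @app _ n f args => @ifun L M n f (fun j => eval_t e (args j))
  end.

Fixpoint sat (e : nat -> M) (p : formula L) : Prop :=
  match p with
  | f_eq t1 t2 => eval_t e t1 = eval_t e t2
  | @f_rel _ n r args => @irel L M n r (fun j => eval_t e (args j))
  | f_false => False
  | f_not q => ~ sat e q
  | f_and q r => sat e q /\ sat e r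
  | f_or q r => sat e q \/ sat e r
  | f_imp q r => sat e q -> sat e r
  | f_ex q => exists x : M, sat (scons x e) q
  | f_all q => forall x : M, sat (scons x e) q
  end.

(* environment given by a finite tuple: variable i |-> i-th entry
   (entries beyond the tuple get a fixed default; irrelevant for formulas
   bounded by the tuple length) *)
Definition envl (l : list M) : nat -> M := fun i => nth i l (dom_inh M).

Definition vec2 (a b : M) : Fin.t 2 -> M :=
  fun i => match i with Fin.F1 => a | _ => b end.

Definition ltM (a b : M) : Prop := @irel L M 2 (ltsym L) (vec2 a b).

Definition strict_linear_order : Prop :=
  (forall a, ~ ltM a a) /\
  (forall a b c, ltM a b -> ltM b c -> ltM a c) /\
  (forall a b, ltM a b \/ a = b \/ ltM b a).

Fixpoint unbounded (n : nat) (P : list M -> Prop) : Prop :=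
  match n with
  | 0 => P nil
  | S n' => forall a : M, exists x : M, ltM a x /\ unbounded n' (fun xs => P (x :: xs))
  end.

Definition all_lt (l : list M) (a : M) : Prop := Forall (fun s => ltM s a) l.

(* B_tau(x1..xn; a), for a term tau(u1..uk, s1..sl) (variables 0..k-1 are u,
   k..k+l-1 are s): for all 0-based indices i_0 < ... < i_k < n and all
   s-tuples below a, tau(x_{i_0},...,x_{i_{k-1}}, s) < x_{i_k}. *)
Definition B_tau (k l : nat) (tau : term L) (a : M) (xs : list M) : Prop :=
  forall idx : nat -> nat,
    (forall j, j < k -> idx j < idx (S j)) -> idx k < length xs ->
    forall ss : list M, length ss = l -> all_lt ss a ->
      ltM (eval_t (envl (map (fun j => nth (idx j) xs (dom_inh M)) (seq 0 k) ++ ss)) tau)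
          (nth (idx k) xs (dom_inh M)).
End Semantics.

Arguments ltM {L M} _ _.
Arguments unbounded {L M} _ _.
Arguments envl {L M} _ _.
Arguments all_lt {L M} _ _.
Arguments scons {L M} _ _ _.
Arguments eval_t {L M} _ _.

Definition theory (L : signature) := formula L -> Prop.

Definition models (L : signature) (M : structure L) (T : theory L) : Prop :=
  forall p, T p -> forall e : nat -> M, sat M e p.

Definition is_theory (L : signature) (T : theory L) : Prop :=
  forall p, T p -> sentence p.

Definition complete (L : signature) (T : theory L) : Prop :=
  (exists M : structure L, models M T) /\
  forall p, sentence p ->
    (forall M : structure L, models M T -> forall e, sat M e p) \/
    (forall M : structure L, models M T -> forall e, ~ sat M e p).

(* Skolem functions: for every theta(y, x) (variable 0 is y, the other free
   variables are x), a term tau(x) with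
   T |= forall x (exists y theta(y,x) -> theta(tau(x),x)). *)
Definition has_skolem (L : signature) (T : theory L) : Prop :=
  forall theta : formula L, exists tau : term L,
    forall M : structure L, models M T ->
      forall e : nat -> M,
        (exists y : M, sat M (scons y e) theta) ->
        sat M (scons (eval_t e tau) e) theta.

Definition lt_linear (L : signature) (T : theory L) : Prop :=
  forall M : structure L, models M T -> strict_linear_order M.

(* Regularity scheme: formula phi(x, y, t) with |x| = n, |y| = m, |t| = k
   (variables 0..n-1 = x, n..n+m-1 = y, n+m..n+m+k-1 = t). *)
Definition regularity (L : signature) (T : theory L) : Prop :=
  forall (n m k : nat) (phi : formula L), bounded_f (n + m + k) phi ->
  forall M : structure L, models M T ->
  forall (y0 : M) (b : list M), length b = k ->
    unbounded n (fun xs => exists ys : list M,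
        length ys = m /\ all_lt ys y0 /\ sat M (envl (xs ++ ys ++ b)) phi) ->
    exists ys : list M, length ys = m /\ all_lt ys y0 /\
      unbounded n (fun xs => sat M (envl (xs ++ ys ++ b)) phi).

(* Fix [c] of length [|u|]. If the values [tau(c, s)] with [s < a] had no upper
   bound, then [(exists s < a) ~ (tau(c, s) < x)] would be [x]-unbounded, so by
   regularity some single [s < a] would make [~ (tau(c, s) < x)] unbounded, which
   is absurd. Hence every such set is bounded, and so is the union of these sets
   over the finitely many [c] drawn from an already chosen finite prefix. In the
   game defining unboundedness we may therefore always answer above this bound:
   the new [x_i] then lies above every [tau(x_{i_1}, ..., x_{i_k}, s)] with
   [i_1 < ... < i_k < i], which is exactly what [B_tau] requires. *)
From Pilot Require Import Defs.
From Stdlib Require Import List Arith Lia Classical FunctionalExtensionality.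
Import ListNotations.

Section LinearOrder.
Variables (L : signature) (M : structure L).
Hypothesis lin : strict_linear_order M.

Definition leM (x y : M) : Prop := x = y \/ ltM x y.

Lemma ltM_trans (x y z : M) : ltM x y -> ltM y z -> ltM x z.
Proof. destruct lin as [_ [tr _]]; eauto. Qed.

Lemma ltM_leM_trans (x y z : M) : ltM x y -> leM y z -> ltM x z.
Proof. intros Hxy [<-|Hyz]; eauto using ltM_trans. Qed.

Lemma leM_ltM_trans (x y z : M) : leM x y -> ltM y z -> ltM x z.
Proof. intros [->|Hxy] Hyz; eauto using ltM_trans. Qed.

Lemma leM_upper_bound2 (x y : M) : exists z, leM x z /\ leM y z.
Proof.
  destruct lin as [_ [_ tri]]; unfold leM.
  destruct (tri x y) as [H|[H|H]]; [exists y | exists y | exists x]; auto.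
Qed.

Definition bounded_above (S : M -> Prop) : Prop :=
  exists z, forall y, S y -> ltM y z.

Lemma bounded_above_list_union {A : Type} (S : A -> M -> Prop) (cs : list A) :
  (forall c, In c cs -> bounded_above (S c)) ->
  bounded_above (fun y => exists c, In c cs /\ S c y).
Proof.
  induction cs as [|c cs IH]; intros Hcs.
  - exists (dom_inh M); intros y [? [[] _]].
  - destruct (Hcs c (or_introl eq_refl)) as [z1 Hz1].
    destruct IH as [z2 Hz2]; [intros; apply Hcs; right; auto|].
    destruct (leM_upper_bound2 z1 z2) as [z [H1 H2]].
    exists z; intros y [c' [[<-|Hc'] Hy]].
    + apply (ltM_leM_trans _ z1); auto.
    + apply (ltM_leM_trans _ z2); eauto.
Qed.

End LinearOrder.

Arguments leM {L M} _ _.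
Arguments bounded_above {L M} _.
Arguments ltM_trans {L M} lin {x y z}.
Arguments leM_ltM_trans {L M} lin {x y z}.
Arguments leM_upper_bound2 {L M} lin x y.
Arguments bounded_above_list_union {L M} lin {A} S cs.

Lemma unbounded_impl L (M : structure L) m (P Q : list M -> Prop) :
  (forall xs, P xs -> Q xs) -> unbounded m P -> unbounded m Q.
Proof.
  revert P Q; induction m as [|m IH]; simpl; intros P Q HPQ HP; auto.
  intros a; destruct (HP a) as [x [Hx Hu]].
  exists x; split; auto.
  eapply IH; [|exact Hu]; auto.
Qed.

Fixpoint tuples {A : Type} (s : list A) (m : nat) : list (list A) :=
  match m with
  | 0 => [[]]
  | S m => flat_map (fun z => map (cons z) (tuples s m)) s
  end.

Lemma in_tuples {A : Type} (s c : list A) : incl c s -> In c (tuples s (length c)).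
Proof.
  induction c as [|z c IH]; simpl; auto.
  intros [Hz Hc]%incl_cons_inv.
  apply in_flat_map; exists z; split; auto.
  apply in_map, IH, Hc.
Qed.

Lemma in_tuples_length {A : Type} (s c : list A) m : In c (tuples s m) -> length c = m.
Proof.
  revert c; induction m as [|m IH]; simpl; intros c Hc.
  - destruct Hc as [<-|[]]; reflexivity.
  - apply in_flat_map in Hc as [z [_ Hc]].
    apply in_map_iff in Hc as [c' [<- Hc']].
    simpl; f_equal; auto.
Qed.

Fixpoint rename {L} (rho : nat -> nat) (t : term L) : term L :=
  match t with
  | var i => var (rho i)
  | Defs.app f args => Defs.app f (fun j => rename rho (args j))
  end.

Lemma eval_rename L (M : structure L) rho (t : term L) (e : nat -> M) :
  eval_t e (rename rho t) = eval_t (fun i => e (rho i)) t.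
Proof.
  induction t; simpl; auto.
  f_equal; apply functional_extensionality; auto.
Qed.

Lemma eval_t_ext L (M : structure L) K (t : term L) (e1 e2 : nat -> M) :
  bounded_t K t -> (forall i, i < K -> e1 i = e2 i) -> eval_t e1 t = eval_t e2 t.
Proof.
  induction t; simpl; intros Ht He; auto.
  f_equal; apply functional_extensionality; auto.
Qed.

Lemma bounded_rename L K K' rho (t : term L) :
  bounded_t K t -> (forall i, i < K -> rho i < K') -> bounded_t K' (rename rho t).
Proof. induction t; simpl; auto. Qed.

Section TermValues.
Variables (L : signature) (M : structure L).
Variables (ku l : nat) (tau : term L) (a : M).

Definition term_values (c : list M) (y : M) : Prop :=
  exists ss, length ss = l /\ all_lt ss a /\ y = eval_t (envl (c ++ ss)) tau.

Definition term_values_on (pre : list M) (y : M) : Prop :=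
  exists c, length c = ku /\ incl c pre /\ term_values c y.

Lemma term_values_on_bounded (lin : strict_linear_order M) :
  (forall c, length c = ku -> bounded_above (term_values c)) ->
  forall pre, bounded_above (term_values_on pre).
Proof.
  intros Hc pre.
  destruct (bounded_above_list_union lin term_values (tuples pre ku)) as [z Hz].
  { intros c Hin; apply Hc; eapply in_tuples_length; eauto. }
  exists z; intros y [c [Hl [Hincl Hy]]]; apply Hz.
  exists c; split; auto; rewrite <- Hl; apply in_tuples, Hincl.
Qed.

Lemma strictly_increasing_lt (idx : nat -> nat) m :
  (forall j, j < m -> idx j < idx (S j)) -> forall j, j < m -> idx j < idx m.
Proof.
  induction m as [|m IH]; intros Hinc j Hj; [lia|].
  assert (idx m < idx (S m)) by (apply Hinc; lia).
  destruct (Nat.eq_dec j m) as [->|Hne]; auto.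
  assert (idx j < idx m) by (apply IH; [intros; apply Hinc|]; lia).
  lia.
Qed.

Lemma B_tau_snoc (pre : list M) (x : M) :
  B_tau M ku l tau a pre -> (forall y, term_values_on pre y -> ltM y x) ->
  B_tau M ku l tau a (pre ++ [x]).
Proof.
  intros HB Hx idx Hinc Hk ss Hss Hall.
  rewrite length_app in Hk; simpl in Hk.
  pose proof (strictly_increasing_lt idx ku Hinc) as Hlt.
  destruct (Nat.eq_dec (idx ku) (length pre)) as [Heq|Hne].
  - rewrite Heq, nth_middle.
    apply Hx; exists (map (fun j => nth (idx j) (pre ++ [x]) (dom_inh M)) (seq 0 ku)).
    split; [rewrite length_map, length_seq; reflexivity|split].
    + intros z Hz; apply in_map_iff in Hz as [j [<- Hj]]; apply in_seq in Hj.
      specialize (Hlt j ltac:(lia)).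
      rewrite app_nth1 by lia; apply nth_In; lia.
    + exists ss; auto.
  - rewrite app_nth1 by lia.
    rewrite (map_ext_in _ (fun j => nth (idx j) pre (dom_inh M))); [apply HB; auto; lia|].
    intros j Hj; apply in_seq in Hj; specialize (Hlt j ltac:(lia)).
    apply app_nth1; lia.
Qed.

Lemma unbounded_B_tau (lin : strict_linear_order M) (P : list M -> Prop) :
  (forall pre, bounded_above (term_values_on pre)) ->
  forall m pre, unbounded m (fun xs => P (pre ++ xs)) -> B_tau M ku l tau a pre ->
  unbounded m (fun xs => P (pre ++ xs) /\ B_tau M ku l tau a (pre ++ xs)).
Proof.
  intros Hbd m; induction m as [|m IH]; intros pre HU HB; simpl in *.
  - rewrite app_nil_r in *; auto.
  - intros al; destruct (Hbd pre) as [z Hz].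
    destruct (leM_upper_bound2 lin al z) as [g [Hal Hzg]].
    destruct (HU g) as [x [Hgx HUx]].
    exists x; split; [exact (leM_ltM_trans lin Hal Hgx)|].
    assert (HBx : B_tau M ku l tau a (pre ++ [x])).
    { apply B_tau_snoc; auto.
      intros y Hy; exact (ltM_trans lin (Hz y Hy) (leM_ltM_trans lin Hzg Hgx)). }
    eapply unbounded_impl; [|apply (IH (pre ++ [x])); auto].
    + intros xs; cbv beta; rewrite <- app_assoc; auto.
    + eapply unbounded_impl; [|exact HUx].
      intros xs; cbv beta; rewrite <- app_assoc; auto.
Qed.

End TermValues.

Arguments term_values {L M} l tau a c y.
Arguments term_values_on {L M} ku l tau a pre y.
Arguments term_values_on_bounded {L M ku l tau a} lin.
Arguments unbounded_B_tau {L M ku l tau a} lin P.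

Definition targ {L} (t1 t2 : term L) : Fin.t 2 -> term L :=
  fun i => match i with Fin.F1 => t1 | _ => t2 end.

Definition not_below {L} (t : term L) : formula L :=
  f_not (f_rel (ltsym L) (targ t (var 0))).

Lemma sat_not_below L (M : structure L) (e : nat -> M) (t : term L) :
  sat M e (not_below t) <-> ~ ltM (eval_t e t) (e 0).
Proof.
  simpl; unfold ltM.
  replace (fun j => eval_t e (targ t (var 0) j)) with (vec2 M (eval_t e t) (e 0));
    [tauto|].
  apply functional_extensionality; intro j.
  apply (Fin.caseS' j); reflexivity.
Qed.

(* Regularity orders the variables as [x, y, t]; here [x] is the bound being
   tested, [y] the parameters [s < a] and [t] the tuple [c]. *)
Definition params_to_back (ku l : nat) (i : nat) : nat :=
  if i <? ku then S (l + i) else S (i - ku).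

Lemma eval_params_to_back L (M : structure L) ku l (tau : term L) (x : M) (c ss : list M) :
  bounded_t (ku + l) tau -> length c = ku -> length ss = l ->
  eval_t (envl (x :: ss ++ c)) (rename (params_to_back ku l) tau)
  = eval_t (envl (c ++ ss)) tau.
Proof.
  intros Htau Hc Hss; rewrite eval_rename.
  apply (eval_t_ext _ _ (ku + l)); auto.
  intros i Hi; unfold envl, params_to_back.
  destruct (Nat.ltb_spec i ku); simpl.
  - rewrite app_nth2, app_nth1 by lia; f_equal; lia.
  - rewrite app_nth1, app_nth2 by lia; f_equal; lia.
Qed.

Lemma bounded_not_below_params_to_back {L} {ku l} {tau : term L} :
  bounded_t (ku + l) tau ->
  bounded_f (1 + l + ku) (not_below (rename (params_to_back ku l) tau)).
Proof.
  intros Htau j; apply (Fin.caseS' j); simpl.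
  - apply (bounded_rename _ (ku + l)); auto.
    intros i Hi; unfold params_to_back; destruct (Nat.ltb_spec i ku); lia.
  - intros; lia.
Qed.

Lemma term_values_bounded {L} {T : theory L} (Hreg : regularity T)
  {M : structure L} (HM : models M T) (nomax : forall y : M, exists x, ltM y x)
  {ku l} {tau : term L} (Htau : bounded_t (ku + l) tau) (a : M) (c : list M) :
  length c = ku -> bounded_above (term_values l tau a c).
Proof.
  intros Hc; apply NNPP; intros Hunb.
  set (phi := not_below (rename (params_to_back ku l) tau)).
  assert (Hsat : forall x ss, length ss = l ->
            sat M (envl (x :: ss ++ c)) phi <-> ~ ltM (eval_t (envl (c ++ ss)) tau) x).
  { intros x ss Hss; unfold phi; rewrite sat_not_below.
    rewrite eval_params_to_back; auto; reflexivity. }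
  destruct (Hreg 1 l ku phi (bounded_not_below_params_to_back Htau) M HM a c Hc)
    as [ys [Hys [_ Hu]]].
  - simpl; intros al; destruct (nomax al) as [x Hx].
    exists x; split; auto.
    assert (Hnot : ~ forall y, term_values l tau a c y -> ltM y x)
      by (intros H; apply Hunb; exists x; auto).
    apply not_all_ex_not in Hnot as [y Hy].
    apply imply_to_and in Hy as [[ss [Hss [Hall ->]]] Hn].
    exists ss; repeat split; auto; apply Hsat; auto.
  - simpl in Hu; destruct (Hu (eval_t (envl (c ++ ys)) tau)) as [x [Hx Hs]].
    apply (Hsat x ys Hys) in Hs; contradiction.
Qed.

Theorem lemma2p4 (L : signature) (T : theory L)
  (HL : countable_sig L) (HT : is_theory T) (Hcompl : complete T)
  (Hsk : has_skolem T) (Hlin : lt_linear T) (Hreg : regularity T)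
  (M : structure L) (HM : models M T)
  (n k : nat) (phi : formula L) (Hphi : bounded_f (n + k) phi)
  (b : list M) (Hb : length b = k)
  (Hunb : unbounded n (fun xs => sat M (envl (xs ++ b)) phi))
  (ku l : nat) (tau : term L) (Htau : bounded_t (ku + l) tau) (Hku : ku < n)
  (a : M) :
  unbounded n (fun xs => sat M (envl (xs ++ b)) phi /\ B_tau M ku l tau a xs).
Proof.
  pose proof (Hlin M HM) as lin.
  assert (nomax : forall y : M, exists x, ltM y x).
  { destruct n as [|n]; [lia|].
    intros y; destruct (Hunb y) as [x [Hx _]]; eauto. }
  refine (unbounded_B_tau (ku := ku) (l := l) (tau := tau) (a := a) lin
            (fun xs => sat M (envl (xs ++ b)) phi) _ n nil Hunb _).
  - apply term_values_on_bounded; auto.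
    intros c; apply (term_values_bounded Hreg HM nomax Htau).
  - intros idx _ Hk; simpl in Hk; lia.
Qed.
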